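(* Let $V$ be a $\mathcal{T}$-module which is free of rank $1$ as a $\mathcal{U}(\mathfrak{h})$-module, $\mathfrak{h}=\mathbb{C}L_0\oplus\mathbb{C}G_0$, with an even free generator $\mathbf{1}$, so that $V_{\bar0}=\mathbb{C}[L_0]\mathbf{1}$ and $V_{\bar1}=G_0\mathbb{C}[L_0]\mathbf{1}$. Write $f(\partial^2)\mathbf{1}:=f(L_0)\mathbf{1}$ and $\partial f(\partial^2)\mathbf{1}:=G_0f(L_0)\mathbf{1}$ for polynomials $f$ (note $G_0^2=L_0$). Let $\lambda\in\mathbb{C}^*$, $\alpha\in\mathbb{C}$ be such that $L_mf(\partial^2)\mathbf{1}=\lambda^m(\partial^2+m\alpha)f(\partial^2+m)\mathbf{1}$ for all $m\in\mathbb{Z}$ and all polynomials $f$. Then one of the following holds: (a) for all $r\in\frac12+\mathbb{Z}$ and $p\in\frac12\mathbb{Z}$: $G_p\mathbf{1}=\lambda^p\partial\mathbf{1}$, $G_r\partial\mathbf{1}=-\lambda^r(\partial^2+2r\alpha)\mathbf{1}$, $I_r\mathbf{1}=-2\lambda^r\alpha\mathbf{1}$; (b) for all $r\in\frac12+\mathbb{Z}$ and $p\in\frac12\mathbb{Z}$: $G_p\mathbf{1}=(-1)^{2p}\lambda^p\partial\mathbf{1}$, $G_r\partial\mathbf{1}=\lambda^r(\partial^2+2r\alpha)\mathbf{1}$, $I_r\mathbf{1}=2\lambda^r\alpha\mathbf{1}$.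
   Context: The twisted $N=2$ superconformal algebra $\mathcal{T}$ is the Lie superalgebra over $\mathbb{C}$ with basis $\{L_m, I_r, G_p\mid m\in\mathbb{Z}, r\in\frac12+\mathbb{Z}, p\in\frac12\mathbb{Z}\}$, even part spanned by the $L_m,I_r$, odd part by the $G_p$, only nonzero brackets $[L_m,L_n]=(m-n)L_{m+n}$, $[L_m,I_r]=-rI_{m+r}$, $[L_m,G_p]=(\frac m2-p)G_{m+p}$, $[I_r,G_p]=G_{r+p}$, $[G_p,G_q]=(-1)^{2p}2L_{p+q}$ if $p+q\in\mathbb{Z}$, $[G_p,G_q]=(-1)^{2p+1}(p-q)I_{p+q}$ if $p+q\in\frac12+\mathbb{Z}$. A $\mathcal{T}$-module is a $\mathbb{Z}_2$-graded space with $\mathcal{T}_{\bar i}V_{\bar j}\subseteq V_{\bar i+\bar j}$ and $x(yv)-(-1)^{|x||y|}y(xv)=[x,y]v$. For $p\in\frac12\mathbb{Z}$, $\lambda^p$ means $(\lambda^{1/2})^{2p}$ for a fixed square root $\lambda^{1/2}$. *)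

From HB Require Import structures.
From mathcomp Require Import all_boot all_order all_algebra.
From mathcomp Require Import reals complex.
Set Implicit Arguments. Unset Strict Implicit. Unset Printing Implicit Defensive.
Import Order.TTheory GRing.Theory Num.Theory.
Local Open Scope ring_scope.

(* Index conventions: an index p in (1/2)Z is encoded by the integer 2p.
   L m    stands for L_m        (m : int)
   I c    stands for I_{c/2}    (only meaningful for odd c)
   G a    stands for G_{a/2}    (a : int)                               *)

Section Tmod.
Variable R : realType.
Local Notation C := R[i].
Variable V : lmodType C.

Definition subspace (P : V -> Prop) : Prop :=
  P 0 /\ forall (a : C) u v, P u -> P v -> P (a *: u + v).

Definition Z2grading (V0 V1 : V -> Prop) : Prop :=
  [/\ subspace V0, subspace V1,
      (forall v, exists v0 v1, [/\ V0 v0, V1 v1 & v = v0 + v1])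
    & (forall v, V0 v -> V1 v -> v = 0)].

Definition half (k : int) : C := k%:~R / 2.

(* V (with grading V0,V1 and operators L, I, G) is a module over the
   twisted N=2 superconformal algebra T. *)
Definition is_Tmodule (V0 V1 : V -> Prop)
  (L I G : int -> {linear V -> V}) : Prop :=
  [/\ Z2grading V0 V1,
      (forall m v, (V0 v -> V0 (L m v)) /\ (V1 v -> V1 (L m v))),
      (forall c v, odd (absz (c)) -> (V0 v -> V0 (I c v)) /\ (V1 v -> V1 (I c v))),
      (forall a v, (V0 v -> V1 (G a v)) /\ (V1 v -> V0 (G a v))) &
      ((forall (m n : int) v, L m (L n v) - L n (L m v) = (m - n)%:~R *: L (m + n) v) /\
          (forall (m c : int) v, odd (absz (c)) ->
              L m (I c v) - I c (L m v) = - half c *: I (2 * m + c) v) /\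
          (forall (m a : int) v,
              L m (G a v) - G a (L m v) = (half m - half a) *: G (2 * m + a) v) /\
          (forall (c d : int) v, odd (absz (c)) -> odd (absz (d)) ->
              I c (I d v) - I d (I c v) = 0) /\
          (forall (c a : int) v, odd (absz (c)) ->
              I c (G a v) - G a (I c v) = G (c + a) v) /\
          (forall (a b : int) v,
              G a (G b v) + G b (G a v) =
              if ~~ odd (absz (a + b))
              then (exprz (-1) a * 2) *: L (divz (a + b) 2) v
              else (- exprz (-1) a * half (a - b)) *: I (a + b) v))].

Definition pact (T : V -> V) (f : {poly C}) (v : V) : V :=
  \sum_(i < size f) f`_i *: iter i T v.

(* V is free of rank one over U(h), h = C L_0 + C G_0, on the generator one:
   by PBW, U(h) has basis {L_0^k, L_0^k G_0}, so every v is uniquely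
   f(L_0) one + g(L_0) (G_0 one). *)
Definition free_rank1_Uh (L0 G0 : V -> V) (one : V) : Prop :=
  forall v, exists! fg : {poly C} * {poly C},
    v = pact L0 fg.1 one + pact L0 fg.2 (G0 one).

End Tmod.

(* Write P f := f(L_0) 1 and Q g := g(L_0) G_0 1.  Freeness of V over U(h) makes
   f |-> P f and g |-> Q g injective parametrisations of V_0 and V_1, and the
   relations [L_0, G_p] = -p G_p turn G_p f(L_0) into f(L_0 + p) G_p, so every
   relation of T applied to 1 becomes an identity between polynomials.
   For n in Z, {G_0, G_n} = 2 L_n and G_n^2 = L_2n force G_n 1 = lam^n G_0 1.
   For r in 1/2 + Z, [L_2r, G_r] = 0 makes the polynomial of G_r 1 invariant
   under a nonzero translation, so G_r 1 = gam_r G_0 1, and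
   [L_m, G_r] = (m/2 - r) G_(m+r) gives gam_(m+r) = lam^m gam_r for m <> 2r.
   Then {G_0, G_r} = r I_r, G_r^2 = -L_2r and [I_r, G_2] = G_(r+2) give
   gam_r^2 = lam^2r, I_r 1 = -2 gam_r alpha 1 and G_r G_0 1 = -gam_r (L_0 + 2r alpha) 1.
   Finally gam_(1/2) = eps mu with eps = 1 or -1, and gam_r = eps mu^2r. *)

From Pilot Require Import Defs.
From HB Require Import structures.
From mathcomp Require Import all_boot all_order all_algebra.
From mathcomp Require Import reals complex.
From mathcomp Require Import ring zify.
Import Order.TTheory GRing.Theory Num.Theory.
Set Implicit Arguments. Unset Strict Implicit. Unset Printing Implicit Defensive.
Local Open Scope ring_scope.

Section PolynomialAction.
Variable R : realType.
Local Notation C := R[i].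
Variable V : lmodType C.
Implicit Types (T : V -> V) (f g : {poly C}) (v : V).

Lemma pact_widen T f v n : (size f <= n)%N ->
  pact T f v = \sum_(i < n) f`_i *: iter i T v.
Proof.
move=> hn; rewrite /pact -(subnKC hn) big_split_ord /=.
rewrite [X in _ + X]big1 ?addr0 // => i _.
by rewrite nth_default ?scale0r // leq_addr.
Qed.

Lemma pactD T f g v : pact T (f + g) v = pact T f v + pact T g v.
Proof.
have hfg := size_polyD f g.
rewrite (pact_widen _ _ hfg) (pact_widen _ _ (leq_maxl (size f) (size g))).
rewrite (pact_widen _ _ (leq_maxr (size f) (size g))) -big_split.
by apply: eq_bigr => i _; rewrite coefD scalerDl.
Qed.

Lemma pactZ T a f v : pact T (a *: f) v = a *: pact T f v.
Proof.
rewrite (pact_widen _ _ (size_scale_leq a f)) /pact scaler_sumr.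
by apply: eq_bigr => i _; rewrite coefZ scalerA.
Qed.

Lemma pactN T f v : pact T (- f) v = - pact T f v.
Proof. by rewrite -(scaleN1r f) pactZ scaleN1r. Qed.

Lemma pact0 T v : pact T 0 v = 0.
Proof. by rewrite /pact size_poly0 big_ord0. Qed.

Lemma pactC T c v : pact T c%:P v = c *: v.
Proof. by rewrite (pact_widen _ _ (size_polyC_leq1 c)) big_ord1 coefC. Qed.

Lemma pact1 T v : pact T 1 v = v.
Proof. by rewrite pactC scale1r. Qed.

Lemma pact_mulX T f v : pact T (f * 'X) v = pact T f (T v).
Proof.
have hs : (size (f * 'X)%R <= (size f).+1)%N.
  by rewrite (leq_trans (size_polyMleq _ _)) // size_polyX addn2.
rewrite (pact_widen _ _ hs) big_ord_recl coefMX eqxx scale0r add0r /pact.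
by apply: eq_bigr => i _; rewrite coefMX /= -iterS iterSr.
Qed.

Lemma pactX T v : pact T 'X v = T v.
Proof. by rewrite -['X]mul1r pact_mulX pact1. Qed.

Lemma pact_commute T (S : {linear V -> V}) f v : (forall w, S (T w) = T (S w)) ->
  S (pact T f v) = pact T f (S v).
Proof.
move=> hST; rewrite /pact linear_sum; apply: eq_bigr => i _.
by rewrite linearZ /=; congr (_ *: _); elim: (nat_of_ord i) => //= k <-.
Qed.

Lemma pactZr (T : {linear V -> V}) f a v : pact T f (a *: v) = a *: pact T f v.
Proof.
rewrite /pact scaler_sumr; apply: eq_bigr => i _; rewrite scalerA mulrC -scalerA.
by congr (_ *: _); elim: (nat_of_ord i) => //= k ->; rewrite linearZ.
Qed.

Lemma pactM (T : {linear V -> V}) f g v : pact T (f * g) v = pact T f (pact T g v).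
Proof.
elim/poly_ind: f v => [|p c IH] v; first by rewrite mul0r !pact0.
rewrite mulrDl mulrAC !pactD !pact_mulX mul_polyC pactZ !pactC IH.
by rewrite -(@pact_commute T T g v).
Qed.

Lemma pact_comp_shift (T S : {linear V -> V}) s f v : (forall w, S (T w) = T (S w) + s *: S w) ->
  S (pact T f v) = pact T (f \Po ('X + s%:P)) (S v).
Proof.
move=> hST; elim/poly_ind: f v => [|p c IH] v.
  by rewrite comp_poly0 !pact0 linear0.
rewrite comp_poly_MXaddC !pactD !pactC pact_mulX linearD linearZ /= IH hST.
by rewrite pactM pactD pactX pactC.
Qed.

Lemma subspaceD (P : V -> Prop) u w : subspace P -> P u -> P w -> P (u + w).
Proof. by move=> [_ hP] pu pw; have := hP 1 u w pu pw; rewrite scale1r. Qed.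

Lemma subspaceZ (P : V -> Prop) a u : subspace P -> P u -> P (a *: u).
Proof. by move=> [hP0 hP] pu; have := hP a u 0 pu hP0; rewrite addr0. Qed.

Lemma subspace_pact (P : V -> Prop) T f v : subspace P -> P v ->
  (forall w, P w -> P (T w)) -> P (pact T f v).
Proof.
move=> sP pv hT; apply: big_ind => [|x y|i _]; first by case: sP.
  exact: subspaceD.
by apply: subspaceZ => //; elim: (nat_of_ord i) => //= k; apply: hT.
Qed.

End PolynomialAction.

Lemma shift_invariant_polyC (F : numDomainType) (f : {poly F}) (s : F) :
  s != 0 -> f \Po ('X + s%:P) = f -> f = (f`_0)%:P.
Proof.
move=> s0 hf; set p := f - (f`_0)%:P.
have f_shift x : f.[x + s] = f.[x].
  by rewrite -{2}hf horner_comp hornerD hornerX hornerC.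
have p_root (n : nat) : root p (n%:R * s).
  rewrite /root /p hornerD hornerN hornerC subr_eq0; apply/eqP.
  by elim: n => [|n IH]; rewrite ?mul0r ?horner_coef0 // mulrSr mulrDl mul1r f_shift.
apply/eqP; rewrite -subr_eq0; apply: contraT => p0.
have := max_poly_roots p0 (rs := [seq i%:R * s | i <- iota 0 (size p)]).
rewrite size_map size_iota ltnn; apply.
  by apply/allP => x /mapP [i _ ->]; apply: p_root.
by rewrite map_inj_uniq ?iota_uniq // => i j /(mulIf s0) /eqP; rewrite eqr_nat => /eqP.
Qed.

(* For n in Z, with G_n 1 = g(L_0) G_0 1 and G_n G_0 1 = k(L_0) 1, this is the
   system given by {G_0, G_n} 1 = 2 L_n 1 and G_n^2 1 = L_2n 1. *)
Lemma sum_prod_system_polyC (F : idomainType) (g k : {poly F}) (b x y : F) :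
  b != 0 ->
  g * 'X + k = (2 * b) *: ('X + x%:P) ->
  (g \Po ('X + y%:P)) * k = b ^+ 2 *: ('X + (2 * x)%:P) -> g = b%:P.
Proof.
move=> b0 hsum hprod.
have kE : k = (2 * b) *: ('X + x%:P) - g * 'X by rewrite -hsum addrC addKr.
have size_lin (a z : F) : (size (a *: ('X + z%:P)) <= 2)%N.
  by rewrite (leq_trans (size_scale_leq _ _)) ?size_XaddC.
have g_const : (size g <= 1)%N.
  rewrite leqNgt; apply/negP => g_big.
  have g0 : g != 0 by rewrite -size_poly_eq0 -lt0n (ltn_trans _ g_big).
  have size_k : size k = (size g).+1.
    rewrite kE addrC size_polyDl size_polyN size_mulX //.
    by rewrite ltnS (leq_trans (size_lin _ _)).
  have k0 : k != 0 by rewrite -size_poly_eq0 size_k.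
  have gs0 : g \Po ('X + y%:P) != 0.
    by rewrite -size_poly_eq0 size_comp_poly2 ?size_XaddC // size_poly_eq0.
  have := size_lin (b ^+ 2) (2 * x).
  rewrite -hprod size_mul // size_comp_poly2 ?size_XaddC // size_k.
  lia.
move: hprod; rewrite kE [g]size1_polyC // comp_polyC.
move=> /(congr1 (fun q : {poly F} => q`_1)).
rewrite coefCM coefB coefZ coefCM coefD coefX coefC coefZ coefD coefX coefC /=.
rewrite addr0 !mulr1 => e; congr (_%:P).
suff : (g`_0 - b) ^+ 2 == 0 by rewrite sqrf_eq0 subr_eq0 => /eqP.
have -> : (g`_0 - b) ^+ 2 = b ^+ 2 - g`_0 * (2 * b - g`_0) by ring.
by rewrite e subrr.
Qed.

Lemma oddz_double (n : int) : odd (absz (2 * n)) = false.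
Proof. by rewrite abszM oddM. Qed.

Lemma expN1z_double (F : numDomainType) (n : int) : (-1 : F) ^ (2 * n) = 1.
Proof. by rewrite expN1r -signr_odd oddz_double. Qed.

Lemma expN1z_odd (F : numDomainType) (c : int) : odd (absz c) -> (-1 : F) ^ c = -1.
Proof. by move=> hc; rewrite expN1r -signr_odd hc expr1. Qed.

Section HalfIndex.
Context {R : realType}.
Local Notation C := R[i].
Local Notation halfz k := (Defs.half R k).

Lemma two_neq0 : (2 : C) != 0.
Proof. by rewrite pnatr_eq0. Qed.

Lemma halfz0 : halfz 0 = 0.
Proof. by rewrite /Defs.half mul0r. Qed.

Lemma halfz_double m : halfz (2 * m) = m%:~R.
Proof. by rewrite /Defs.half intrM [_ * m%:~R]mulrC mulfK ?two_neq0. Qed.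

Lemma halfzN c : halfz (- c) = - halfz c.
Proof. by rewrite /Defs.half intrN mulNr. Qed.

Lemma halfzB_neq0 m c : m != c -> halfz m - halfz c != 0.
Proof.
move=> hmc; rewrite /Defs.half -mulrBl mulf_eq0 invr_eq0 negb_or two_neq0 andbT.
by rewrite -intrB intr_eq0 subr_eq0.
Qed.

End HalfIndex.

Section TwistedN2Module.
Variable R : realType.
Local Notation C := R[i].
Variables (V : lmodType C) (V0 V1 : V -> Prop) (L I G : int -> {linear V -> V}).
Variables (one : V) (lam alpha : C).
Hypothesis hT : is_Tmodule V0 V1 L I G.
Hypothesis hfree : free_rank1_Uh (L 0) (G 0) one.
Hypothesis one_even : V0 one.
Hypothesis lam_neq0 : lam != 0.
Hypothesis L_pact : forall (m : int) (f : {poly C}),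
  L m (pact (L 0) f one) =
  exprz lam m *: pact (L 0) (('X + (m%:~R * alpha)%:P) * (f \Po ('X + m%:~R%:P))) one.

Local Notation P f := (pact (L 0) f one).
Local Notation Q f := (pact (L 0) f (G 0 one)).
Local Notation halfz k := (Defs.half R k).

Lemma L_G m a v :
  L m (G a v) = G a (L m v) + (halfz m - halfz a) *: G (2 * m + a) v.
Proof. by case: hT => _ _ _ _ [_ [_ [LG _]]]; rewrite -LG addrC subrK. Qed.

Lemma I_G c a v : odd (absz c) -> I c (G a v) = G a (I c v) + G (c + a) v.
Proof. by case: hT => _ _ _ _ [_ [_ [_ [_ [IG _]]]]] hc; rewrite -IG // addrC subrK. Qed.

Lemma G_G a b v : G a (G b v) + G b (G a v) =
  if ~~ odd (absz (a + b)) then ((-1) ^ a * 2) *: L ((a + b) %/ 2)%Z v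
  else (- (-1) ^ a * halfz (a - b)) *: I (a + b) v.
Proof. by case: hT => _ _ _ _ [_ [_ [_ [_ [_ GG]]]]]. Qed.

Lemma G_sq a v : G a (G a v) = (-1) ^ a *: L a v.
Proof.
have := G_G a a v; rewrite -mulr2n -scaler_nat (_ : a + a = 2 * a); last by lia.
by rewrite oddz_double /= mulKz // mulrC -scalerA => /(scalerI two_neq0).
Qed.

Lemma G0_G0 v : G 0 (G 0 v) = L 0 v.
Proof. by rewrite G_sq expr0z scale1r. Qed.

Lemma G0_G_even n v : G 0 (G (2 * n) v) + G (2 * n) (G 0 v) = 2 *: L n v.
Proof. by rewrite G_G add0r oddz_double /= expr0z mul1r mulKz. Qed.

Lemma G0_G_odd c v : odd (absz c) ->
  G 0 (G c v) + G c (G 0 v) = halfz c *: I c v.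
Proof. by move=> hc; rewrite G_G add0r hc /= expr0z sub0r halfzN mulN1r opprK. Qed.

Lemma G_L0 a v : G a (L 0 v) = L 0 (G a v) + halfz a *: G a v.
Proof. by rewrite L_G mulr0 add0r halfz0 sub0r scaleNr subrK. Qed.

Lemma G0_L0 v : G 0 (L 0 v) = L 0 (G 0 v).
Proof. by rewrite G_L0 halfz0 scale0r addr0. Qed.

Lemma grading : Z2grading V0 V1.
Proof. by case: hT. Qed.

Lemma L_V0 m v : V0 v -> V0 (L m v).
Proof. by case: hT => _ par _ _ _; apply: (par m v).1. Qed.

Lemma L_V1 m v : V1 v -> V1 (L m v).
Proof. by case: hT => _ par _ _ _; apply: (par m v).2. Qed.

Lemma G_V0 a v : V0 v -> V1 (G a v).
Proof. by case: hT => _ _ _ par _; apply: (par a v).1. Qed.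

Lemma G_V1 a v : V1 v -> V0 (G a v).
Proof. by case: hT => _ _ _ par _; apply: (par a v).2. Qed.

Lemma I_V0 c v : odd (absz c) -> V0 v -> V0 (I c v).
Proof. by case: hT => _ _ par _ _ hc; apply: (par c v hc).1. Qed.

Lemma P_V0 f : V0 (P f).
Proof. by case: grading => sV0 _ _ _; apply: subspace_pact sV0 one_even (@L_V0 0). Qed.

Lemma Q_V1 f : V1 (Q f).
Proof.
case: grading => _ sV1 _ _.
exact: subspace_pact sV1 (G_V0 0 one_even) (@L_V1 0).
Qed.

Lemma V0_P v : V0 v -> exists f, v = P f.
Proof.
move=> hv; have [[f g] [/= vE _]] := hfree v.
case: grading => sV0 _ _ disj; exists f.
suff Q0 : Q g = 0 by rewrite vE Q0 addr0.
apply: disj (Q_V1 g); rewrite (_ : Q g = (-1) *: P f + v).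
  by apply: subspaceD => //; apply: subspaceZ => //; apply: P_V0.
by rewrite vE scaleN1r addKr.
Qed.

Lemma V1_Q v : V1 v -> exists g, v = Q g.
Proof.
move=> hv; have [[f g] [/= vE _]] := hfree v.
case: grading => _ sV1 _ disj; exists g.
suff P0 : P f = 0 by rewrite vE P0 add0r.
apply: disj (P_V0 f) _; rewrite (_ : P f = (-1) *: Q g + v).
  by apply: subspaceD => //; apply: subspaceZ => //; apply: Q_V1.
by rewrite vE scaleN1r addrC addrK.
Qed.

Lemma PQ_inj f g f' g' : P f + Q g = P f' + Q g' -> f = f' /\ g = g'.
Proof.
move=> e; have [fg [_ uniq_fg]] := hfree (P f + Q g).
by move: (uniq_fg (f', g') e) (uniq_fg (f, g) erefl) => -> [-> ->].
Qed.

Lemma P_inj f f' : P f = P f' -> f = f'.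
Proof. by move=> e; have [] := @PQ_inj f 0 f' 0; rewrite ?pact0 ?addr0. Qed.

Lemma Q_inj g g' : Q g = Q g' -> g = g'.
Proof. by move=> e; have [] := @PQ_inj 0 g 0 g'; rewrite ?pact0 ?add0r. Qed.

Lemma scaleG0_inj a b : a *: G 0 one = b *: G 0 one -> a = b.
Proof. by rewrite -!(pactC (L 0)) => /Q_inj /polyC_inj. Qed.

Lemma Q_G0 f : Q f = G 0 (P f).
Proof. by rewrite (pact_commute _ _ G0_L0). Qed.

Lemma G0_Q f : G 0 (Q f) = P (f * 'X).
Proof. by rewrite (pact_commute _ _ G0_L0) G0_G0 pact_mulX. Qed.

Lemma G_pact a f v :
  G a (pact (L 0) f v) = pact (L 0) (f \Po ('X + (halfz a)%:P)) (G a v).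
Proof. exact: pact_comp_shift (G_L0 a). Qed.

Lemma L_one m : L m one = exprz lam m *: P ('X + (m%:~R * alpha)%:P).
Proof. by have := L_pact m 1; rewrite pact1 -polyC1 comp_polyC polyC1 mulr1. Qed.

Lemma L_Q m f : L m (Q f) = G 0 (L m (P f)) + halfz m *: G (2 * m) (P f).
Proof. by rewrite Q_G0 L_G halfz0 subr0 addr0. Qed.

Lemma G_even_one n : G (2 * n) one = exprz lam n *: G 0 one.
Proof.
have [g gE] := V1_Q (G_V0 (2 * n) one_even).
have [k kE] := V0_P (G_V1 (2 * n) (G_V0 0 one_even)).
have hsum : g * 'X + k = (2 * exprz lam n) *: ('X + (n%:~R * alpha)%:P).
  by apply: P_inj; rewrite pactD pactZ -scalerA -L_one -G0_Q -gE -kE G0_G_even.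
have hprod : (g \Po ('X + (halfz (2 * n))%:P)) * k =
             exprz lam (2 * n) *: ('X + ((2 * n)%:~R * alpha)%:P).
  by apply: P_inj; rewrite pactM -kE -G_pact -gE G_sq expN1z_double scale1r L_one pactZ.
have lam_double : exprz lam (2 * n) = exprz lam n ^+ 2 by rewrite mulrC -exprz_exp.
rewrite halfz_double lam_double intrM -mulrA in hprod.
have := sum_prod_system_polyC (expfz_neq0 n lam_neq0) hsum hprod.
by rewrite gE => ->; rewrite pactC.
Qed.

Lemma G_odd_one_const c : odd (absz c) -> exists gam, G c one = gam *: G 0 one.
Proof.
move=> hc; have [g gE] := V1_Q (G_V0 c one_even).
have e := L_G c c one; rewrite subrr scale0r addr0 in e.
rewrite gE L_Q L_pact L_one !linearZZ !G_pact G_even_one pactZr gE -!pactM in e.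
rewrite halfz0 halfz_double addr0 comp_polyXr -!pactZ -pactD in e.
move/Q_inj: e; rewrite comp_polyD comp_polyX comp_polyC -!mul_polyC.
set gs := g \Po _ => e.
have : (exprz lam c)%:P * (('X + (halfz c + c%:~R * alpha)%:P) * (gs - g)) = 0.
  by move/eqP: e; rewrite -subr_eq0 => /eqP <-; rewrite polyCD; ring.
move/eqP; rewrite !mulf_eq0 polyC_eq0 expfz_eq0 (negbTE lam_neq0) andbF /=.
rewrite -size_poly_eq0 size_XaddC /= subr_eq0 => /eqP gsE.
have c_neq0 : c%:~R != 0 :> C by rewrite intr_eq0; apply: contraTneq hc => ->.
have gC := shift_invariant_polyC c_neq0 gsE.
by exists g`_0; rewrite gE {1}gC pactC.
Qed.

Lemma G_odd_one_shift c m gam : odd (absz c) -> m != c ->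
  G c one = gam *: G 0 one -> G (2 * m + c) one = (exprz lam m * gam) *: G 0 one.
Proof.
move=> hc hmc gE; have [g gE'] := V1_Q (G_V0 (2 * m + c) one_even).
have e := L_G m c one.
rewrite gE' gE linearZZ L_G addr0 halfz0 subr0 L_one linearZZ (linearZZ (G c)) in e.
rewrite -Q_G0 G_even_one G_pact gE pactZr in e.
rewrite -[lam ^ m *: G 0 one](pactC (L 0)) -!pactZ -!pactD -pactZ in e.
move/Q_inj: e; rewrite comp_polyD comp_polyX comp_polyC -!mul_polyC => e.
have : (halfz m - halfz c)%:P * (g - (exprz lam m * gam)%:P) = 0.
  by move/eqP: e; rewrite eq_sym -subr_eq0 => /eqP <-; rewrite !polyCB polyCM; ring.
move/eqP; rewrite mulf_eq0 polyC_eq0 (negbTE (halfzB_neq0 hmc)) subr_eq0 => /eqP gC.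
by rewrite gE' gC pactC.
Qed.

Lemma I_odd_one_const c gam : odd (absz c) -> G c one = gam *: G 0 one ->
  exists eta, I c one = eta *: one.
Proof.
move=> hc gE; have [h hE] := V0_P (I_V0 hc one_even).
(* [I_r, G_2] = G_(r+2); with G_1 instead, the shift from G_r to G_(r+1)
   would fail for r = 1/2. *)
have e := I_G (2 * 2) one hc.
rewrite G_even_one linearZZ I_G // hE !G_pact addr0 gE G_even_one pactZr in e.
have two_neq_c : 2 != c by apply: contraTneq hc => <-.
rewrite (addrC c) (G_odd_one_shift hc two_neq_c gE) scalerDr -scalerA in e.
move/addIr/(scalerI (expfz_neq0 2 lam_neq0))/Q_inj: e.
rewrite halfz0 polyC0 addr0 comp_polyXr halfz_double => /esym h_shift.
have hC := shift_invariant_polyC two_neq0 h_shift.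
by exists h`_0; rewrite hE {1}hC pactC.
Qed.

Lemma G_odd_one c gam : odd (absz c) -> G c one = gam *: G 0 one ->
  [/\ gam ^+ 2 = exprz lam c,
      G c (G 0 one) = - gam *: (L 0 one + (c%:~R * alpha) *: one)
    & I c one = - (2 * gam * alpha) *: one].
Proof.
move=> hc gE; have [eta IE] := I_odd_one_const hc gE.
have [k kE] := V0_P (G_V1 c (G_V0 0 one_even)).
have kE' : k = (halfz c * eta)%:P - gam *: 'X.
  apply: P_inj; rewrite pactD pactN pactZ pactX pactC -scalerA -IE -kE.
  by rewrite -G0_G_odd // gE linearZZ G0_G0 addrAC subrr add0r.
have hsq : gam *: k = - exprz lam c *: ('X + (c%:~R * alpha)%:P).
  apply: P_inj; rewrite !pactZ -kE -linearZZ -gE G_sq (expN1z_odd _ hc) L_one.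
  by rewrite scaleN1r scaleNr.
rewrite kE' in hsq.
have := congr1 (fun p : {poly C} => p`_1) hsq; have := congr1 (fun p : {poly C} => p`_0) hsq.
rewrite /= !coefE /= !(mulr0, subr0, add0r, addr0, sub0r, mulr1) => coef0 coef1.
have gam_sq : gam ^+ 2 = exprz lam c by apply: oppr_inj; rewrite -coef1 mulrN.
have gam_neq0 : gam != 0.
  by apply: contra_neq (expfz_neq0 c lam_neq0) => g0; rewrite -gam_sq g0 expr0n.
have halfc_neq0 : halfz c != 0.
  have := @halfzB_neq0 R c 0; rewrite halfz0 subr0; apply.
  by apply: contraTneq hc => ->.
have etaE : eta = - (2 * gam * alpha).
  apply: (mulfI (mulf_neq0 gam_neq0 halfc_neq0)); rewrite -mulrA coef0 -gam_sq.
  by rewrite /Defs.half; field.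
split=> //; last by rewrite IE etaE.
rewrite kE kE' etaE -(pactX (L 0)) -(pactC (L 0) (c%:~R * alpha)) -pactD -pactZ.
congr pact.
by apply/polyP => i; rewrite !coefE /Defs.half; case: i => [|[|i]] /=; field.
Qed.

Variable mu : C.
Hypothesis mu_sq : mu ^+ 2 = lam.

Lemma mu_neq0 : mu != 0.
Proof. by apply: contra_neq lam_neq0 => mu0; rewrite -mu_sq mu0 expr0n. Qed.

Lemma exprz_lam n : exprz lam n = exprz mu (2 * n).
Proof. by rewrite -mu_sq -exprz_exp. Qed.

Lemma G1_one_sign : G 1 one = mu *: G 0 one \/ G 1 one = - mu *: G 0 one.
Proof.
have [gam gE] := @G_odd_one_const 1 isT.
have [gam_sq _ _] := G_odd_one (isT : odd (absz 1)) gE.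
have : (gam - mu) * (gam + mu) = 0 by rewrite -subr_sqr gam_sq mu_sq expr1z subrr.
by move/eqP; rewrite mulf_eq0 subr_eq0 addr_eq0 => /orP [] /eqP <-; [left | right].
Qed.

Lemma G_odd_one_sign eps c : G 1 one = (eps * mu) *: G 0 one -> odd (absz c) ->
  G c one = (eps * exprz mu c) *: G 0 one.
Proof.
move=> g1E hc; have [gam gE] := G_odd_one_const hc.
have [k ck] : exists k, c = 2 * k + 1 by exists (c %/ 2)%Z; lia.
have shift_to_1 : - k != c by apply/eqP; lia.
have := G_odd_one_shift hc shift_to_1 gE.
rewrite (_ : 2 * - k + c = 1); last by lia.
rewrite g1E -invr_expz => /scaleG0_inj eps_mu.
rewrite gE ck expfzDr ?mu_neq0 // expr1z -exprz_lam mulrCA eps_mu.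
by rewrite mulVKf ?expfz_neq0.
Qed.

Lemma action_on_one eps : G 1 one = (eps * mu) *: G 0 one ->
  forall c a, odd (absz c) ->
  [/\ G a one = (eps ^+ odd (absz a) * exprz mu a) *: G 0 one,
      G c (G 0 one) = - (eps * exprz mu c) *: (L 0 one + (c%:~R * alpha) *: one)
    & I c one = - (2 * (eps * exprz mu c) * alpha) *: one].
Proof.
move=> g1E c a hc; have [_ GG_E I_E] := G_odd_one hc (G_odd_one_sign g1E hc).
split=> //; have [ha | ha] := boolP (odd (absz a)).
  by rewrite expr1 (G_odd_one_sign g1E ha).
have [n ->] : exists n, a = 2 * n by exists (a %/ 2)%Z; lia.
by rewrite G_even_one expr0 mul1r exprz_lam.
Qed.

End TwistedN2Module.

Unset Implicit Arguments. Set Strict Implicit.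

Theorem lemma3p2 (R : realType) (V : lmodType R[i]) (V0 V1 : V -> Prop)
  (L I G : int -> {linear V -> V}) (one : V) (lam mu alpha : R[i]) :
  is_Tmodule V0 V1 L I G ->
  free_rank1_Uh (L 0) (G 0) one -> V0 one ->
  lam != 0 -> mu ^+ 2 = lam ->
  (forall (m : int) (f : {poly R[i]}),
      L m (pact (L 0) f one) =
      exprz lam m *: pact (L 0) (('X + (m%:~R * alpha)%:P) * (f \Po ('X + m%:~R%:P))) one) ->
  (forall (c a : int), odd (absz (c)) ->
     [/\ G a one = exprz mu a *: G 0 one,
         G c (G 0 one) = - exprz mu c *: (L 0 one + (c%:~R * alpha) *: one)
       & I c one = - (2 * exprz mu c * alpha) *: one])
  \/
  (forall (c a : int), odd (absz (c)) ->
     [/\ G a one = (exprz (-1) a * exprz mu a) *: G 0 one,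
         G c (G 0 one) = exprz mu c *: (L 0 one + (c%:~R * alpha) *: one)
       & I c one = (2 * exprz mu c * alpha) *: one]).
Proof.
move=> hT hfree one_even lam_neq0 mu_sq hL.
have act := action_on_one hT hfree one_even lam_neq0 hL mu_sq.
have [g1E | g1E] := G1_one_sign hT hfree one_even lam_neq0 hL mu_sq.
- left=> c a hc; have [] := act 1 _ c a hc; first by rewrite mul1r.
  by rewrite expr1n !mul1r.
- right=> c a hc; have [] := act (-1) _ c a hc; first by rewrite mulN1r.
  by rewrite expN1r -signr_odd !mulN1r mulrN mulNr !opprK.
Qed.
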